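(* Assume (H3) with a common penalty function $g$ that is positively 1-homogeneous ($g(\lambda x)=\lambda g(x)$ for all $\lambda\ge0$, $x\le 0$). Let $c\in[0,u]$ be a constant and consider the $(d+1)$-dimensional risk vector $(c,X_1,\ldots,X_d)$ whose first component is deterministic and equal to $c$. Assume (H1) holds for the indicator $I$ associated with $(c,X_1,\ldots,X_d)$ and capital $u$ (on $\mathcal{U}^{d+1}_u$), and for the indicator $I$ associated with $(X_1,\ldots,X_d)$ and capital $u-c$ (on $\mathcal{U}^{d}_{u-c}$). Then $A_{c,X_1,\ldots,X_d}(u)=(c,A_{X_1,\ldots,X_d}(u-c))$, the concatenation of $c$ with the vector $A_{X_1,\ldots,X_d}(u-c)$.
   Context: For a random vector $\mathbf Y=(Y_1,\ldots,Y_m)$ of nonnegative random variables and a capital $w\ge 0$, let $\mathcal{U}^m_w=\{v\in[0,w]^m:\sum_k v_k=w\}$ and define the indicator $I_{\mathbf Y,w}(v)=\sum_{k=1}^m \mathbb{E}[g_k(v_k-Y_k)\mathbf 1_{\{Y_k>v_k\}}\mathbf 1_{\{\sum_{l=1}^m Y_l\le w\}}]$, $v\in\mathcal{U}^m_w$, where the penalty functions $g_k:(-\infty,0]\to[0,\infty)$ are $C^1$, convex, with $g_k(0)=0$. (H1): $I_{\mathbf Y,w}$ has a unique minimizer on $\mathcal{U}^m_w$, denoted $A_{Y_1,\ldots,Y_m}(w)$ (the optimal allocation). (H3): all penalty functions equal a common $g$. Here $(X_1,\ldots,X_d)$ is a vector of nonnegative random variables and $u\ge0$. *)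

From HB Require Import structures.
From mathcomp Require Import all_boot all_order all_algebra.
From mathcomp Require Import all_classical all_reals all_analysis.
Set Implicit Arguments. Unset Strict Implicit. Unset Printing Implicit Defensive.
Import Order.TTheory GRing.Theory Num.Theory.
Import numFieldNormedType.Exports.
Local Open Scope classical_set_scope.
Local Open Scope ring_scope.

(* Penalty function g : (-oo,0] -> [0,oo), C^1, convex, g 0 = 0.
   g is given as a total function R -> R; only its values on (-oo,0] matter. *)
Definition penalty {R : realType} (g : R -> R) : Prop :=
  [/\ g 0 = 0,
      (forall x : R, x <= 0 -> 0 <= g x),
      (forall x y t : R, x <= 0 -> y <= 0 -> 0 <= t <= 1 ->
         g (t * x + (1 - t) * y) <= t * g x + (1 - t) * g y) &
      [/\ (forall x : R, x < 0 -> derivable g x 1),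
      {in [set x : R | x < 0], continuous (derive1 g)},
      cvg ((derive1 g) x @[x --> 0%R^'-]) &
      g x @[x --> 0%R^'-] --> g 0]].

Definition pos_homogeneous {R : realType} (g : R -> R) : Prop :=
  forall (lam x : R), 0 <= lam -> x <= 0 -> g (lam * x) = lam * g x.

Definition Uset {R : realType} (m : nat) (w : R) : set ('I_m -> R) :=
  [set v | (forall k, 0 <= v k <= w) /\ \sum_(k < m) v k = w].

Arguments Uset {R} m w.

(* I_{Y,w}(v), with common penalty g (hypothesis (H3)); the integrand is
   nonnegative, so the expectation is taken in the extended reals. *)
Definition Ind {d : measure_display} {T : measurableType d} {R : realType}
  (P : probability T R) (g : R -> R) (m : nat) (Y : 'I_m -> T -> R) (w : R)
  (v : 'I_m -> R) : \bar R :=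
  (\sum_(k < m)
     \int[P]_x (if (v k < Y k x) && (\sum_(l < m) Y l x <= w)
                then g (v k - Y k x) else 0)%:E)%E.

Definition is_argmin {X : Type} {R : realType} (f : X -> \bar R) (A : set X)
  (v : X) : Prop := A v /\ forall w, A w -> (f v <= f w)%E.

Definition H1 {X : Type} {R : realType} (f : X -> \bar R) (A : set X) : Prop :=
  exists v, is_argmin f A v /\ forall w, is_argmin f A w -> w = v.

Definition vcons {A : Type} (m : nat) (c : A) (b : 'I_m -> A) : 'I_m.+1 -> A :=
  fun k => oapp b c (unlift ord0 k).

From HB Require Import structures.
From mathcomp Require Import all_boot all_order all_algebra.
From mathcomp Require Import all_classical all_reals all_analysis.
From mathcomp Require Import measurable_realfun.
From mathcomp Require Import ring lra.
Import Order.TTheory GRing.Theory Num.Theory.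
Local Open Scope classical_set_scope.
Local Open Scope ring_scope.

(* A positively homogeneous penalty is linear, g x = g(-1) * -x, so the
   indicator is g(-1) times the expected total shortfall (Y_k - v_k)^+ on the
   event {sum Y <= w}.  For the vector (c, X) the deterministic component only
   contributes g(-1) (c - v_0)^+ P(sum X <= u - c).  Any v in U^{d+1}_u can be
   moved to (c, w') with w' in U^d_{u-c} by shifting at most (c - v_0)^+ of
   total mass off the tail of v; since the shortfall is 1-Lipschitz in the
   allocation this changes the loss by no more than the first component's
   penalty.  Hence (c, A_X(u - c)) is a minimizer, and uniqueness concludes. *)

Set Implicit Arguments.

Lemma vcons_ord0 (A : Type) m (c : A) (b : 'I_m -> A) : vcons c b ord0 = c.
Proof. by rewrite /vcons unlift_none. Qed.

Lemma vcons_lift (A : Type) m (c : A) (b : 'I_m -> A) i :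
  vcons c b (lift ord0 i) = b i.
Proof. by rewrite /vcons liftK. Qed.

Lemma sum_vcons (R : realType) m (c : R) (b : 'I_m -> R) :
  \sum_(k < m.+1) vcons c b k = c + \sum_(k < m) b k.
Proof.
by rewrite big_ord_recl vcons_ord0; under eq_bigr do rewrite vcons_lift.
Qed.

Lemma Uset_vcons (R : realType) m (u c : R) (b : 'I_m -> R) :
  0 <= c <= u -> Uset m (u - c) b -> Uset m.+1 u (vcons c b).
Proof.
move=> /andP[c0 cu] [b_bnd b_sum]; split; last by rewrite sum_vcons b_sum; ring.
move=> k; rewrite /vcons; case: unlift => [i|] /=; last by rewrite c0 cu.
by have /andP[? ?] := b_bnd i; apply/andP; split; lra.
Qed.

Lemma Uset_ge0 (R : realType) m (w : R) (v : 'I_m -> R) :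
  Uset m w v -> 0 <= w.
Proof. by case=> v_bnd <-; apply: sumr_ge0 => k _; case/andP: (v_bnd k). Qed.

Section Shortfall.
Variable R : realType.

Definition shortfall (y v : R) : R := Num.max (y - v) 0.

Lemma shortfall_ge0 y v : 0 <= shortfall y v.
Proof. by rewrite /shortfall le_max lexx orbT. Qed.

Lemma shortfall_triangle y v w :
  shortfall y w <= shortfall y v + shortfall v w.
Proof.
rewrite /shortfall !maxEle.
by case: (leP (y - w) 0); case: (leP (y - v) 0); case: (leP (v - w) 0); lra.
Qed.

Lemma shortfall_le0 y v : y <= v -> shortfall y v = 0.
Proof. by move=> yv; rewrite /shortfall max_r // subr_le0. Qed.

Variables (d : nat) (v : 'I_d -> R) (s w : R).
Hypotheses (v_ge0 : forall i, 0 <= v i) (v_sum : \sum_(i < d) v i = s).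

Let v_le_s i : v i <= s.
Proof. by rewrite -v_sum (bigD1 i) //= lerDl sumr_ge0. Qed.

Lemma Uset_shrink : 0 <= w -> w < s ->
  Uset d w (fun i => w / s * v i) /\
  \sum_(i < d) shortfall (v i) (w / s * v i) = s - w.
Proof.
move=> w0 ws; have s_gt0 := le_lt_trans w0 ws.
have t0 : 0 <= w / s by rewrite divr_ge0 // ltW.
have tE : w / s * s = w by rewrite divfK // gt_eqF.
split; first split.
- by move=> i; rewrite mulr_ge0 //= -[leRHS]tE; exact: ler_wpM2l.
- by rewrite -mulr_sumr v_sum.
have t1 : w / s <= 1 by rewrite ler_pdivrMr // mul1r ltW.
transitivity (\sum_(i < d) (1 - w / s) * v i).
  apply: eq_bigr => i _; rewrite /shortfall -[X in X - _]mul1r -mulrBl.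
  by rewrite max_l // mulr_ge0 // subr_ge0.
by rewrite -mulr_sumr v_sum mulrBl mul1r tE.
Qed.

Lemma Uset_grow (b : 'I_d -> R) : s <= w -> Uset d w b ->
  Uset d w (fun i => v i + (w - s) / w * b i) /\
  \sum_(i < d) shortfall (v i) (v i + (w - s) / w * b i) = 0.
Proof.
move=> sw Ub; have [b_bnd b_sum] := Ub.
have w0 := Uset_ge0 Ub.
have k0 : 0 <= (w - s) / w by rewrite divr_ge0 // subr_ge0.
have kE : (w - s) / w * w = w - s.
  have [w_eq0|w_neq0] := eqVneq w 0; last by rewrite divfK.
  have s_ge0 : 0 <= s by rewrite -v_sum sumr_ge0.
  by rewrite w_eq0 mulr0; lra.
split; first split.
- move=> i; have /andP[bi0 biw] := b_bnd i.
  have kb_le : (w - s) / w * b i <= w - s by rewrite -[leRHS]kE; exact: ler_wpM2l.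
  have kb_ge0 := mulr_ge0 k0 bi0; have := v_le_s i; have := v_ge0 i.
  by move: ((w - s) / w * b i) kb_le kb_ge0 => *; apply/andP; split; lra.
- by rewrite big_split /= -mulr_sumr b_sum kE v_sum; ring.
apply: big1 => i _; apply: shortfall_le0.
by rewrite lerDl mulr_ge0 //; case/andP: (b_bnd i).
Qed.

Lemma Uset_transport (b : 'I_d -> R) : Uset d w b ->
  exists2 v', Uset d w v' & \sum_(i < d) shortfall (v i) (v' i) <= shortfall s w.
Proof.
move=> Ub; have w0 := Uset_ge0 Ub.
have [ws|sw] := ltP w s.
- have [Uv' cost] := Uset_shrink w0 ws.
  by eexists; [exact: Uv' | rewrite cost /shortfall le_max lexx].
- have [Uv' cost] := Uset_grow sw Ub.
  by eexists; [exact: Uv' | rewrite cost shortfall_ge0].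
Qed.

End Shortfall.

Arguments shortfall {R}.

Section Loss.
Context (dsp : measure_display) (T : measurableType dsp) (R : realType).
Variable al : R.

Definition loss m (Y : 'I_m -> T -> R) (w : R) (v : 'I_m -> R) (x : T) : R :=
  if \sum_(l < m) Y l x <= w then al * \sum_(k < m) shortfall (Y k x) (v k)
  else 0.

Lemma measurable_shortfall (f : T -> R) a : measurable_fun setT f ->
  measurable_fun setT (fun x => shortfall (f x) a).
Proof.
move=> mf; apply: measurable_maxr; last exact: measurable_cst.
by apply: measurable_funB => //; exact: measurable_cst.
Qed.

Lemma measurable_capped m (Y : 'I_m -> T -> R) w (f : T -> R) :
  (forall k, measurable_fun setT (Y k)) -> measurable_fun setT f ->
  measurable_fun setT (fun x => if \sum_(l < m) Y l x <= w then f x else 0).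
Proof.
move=> mY mf; have m_sum : measurable_fun setT (fun x => \sum_(l < m) Y l x).
  exact: measurable_sum.
apply: measurable_fun_ifT => //.
exact: measurable_fun_ler m_sum (measurable_cst w).
Qed.

Lemma measurable_loss m (Y : 'I_m -> T -> R) w v :
  (forall k, measurable_fun setT (Y k)) ->
  measurable_fun setT (EFin \o loss Y w v).
Proof.
move=> mY; apply/measurable_EFinP; apply: measurable_capped => //.
apply: measurable_funM; first exact: measurable_cst.
by apply: measurable_sum => k; exact: measurable_shortfall.
Qed.

Lemma loss_vcons d (X : 'I_d -> T -> R) c u (v : 'I_d.+1 -> R) x :
  loss (vcons (fun _ => c) X) u v x =
  (if \sum_(l < d) X l x <= u - c then al * shortfall c (v ord0) else 0)
  + loss X (u - c) (fun i => v (lift ord0 i)) x.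
Proof.
have sumE : \sum_(l < d.+1) vcons (fun _ => c) X l x = c + \sum_(l < d) X l x.
  by rewrite big_ord_recl vcons_ord0; under eq_bigr do rewrite vcons_lift.
rewrite /loss sumE -lerBrDl big_ord_recl vcons_ord0.
under [X in shortfall _ _ + X]eq_bigr do rewrite vcons_lift.
by case: ifP; rewrite ?addr0 // mulrDr.
Qed.

Hypothesis al_ge0 : 0 <= al.

Lemma loss_ge0 m (Y : 'I_m -> T -> R) w v x : 0 <= loss Y w v x.
Proof.
by rewrite /loss; case: ifP => // _; rewrite mulr_ge0 ?sumr_ge0 // => k _;
  exact: shortfall_ge0.
Qed.

Lemma loss_transport d (X : 'I_d -> T -> R) w e (v v' : 'I_d -> R) x :
  \sum_(i < d) shortfall (v i) (v' i) <= e ->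
  loss X w v' x <= (if \sum_(l < d) X l x <= w then al * e else 0) + loss X w v x.
Proof.
move=> ve; rewrite /loss; case: ifP => _; last by rewrite addr0.
rewrite -mulrDr ler_wpM2l // addrC.
apply: le_trans (lerD (lexx _) ve); rewrite -big_split /=.
by apply: ler_sum => i _; exact: shortfall_triangle.
Qed.

Variables (P : probability T R) (g : R -> R).
Hypothesis g_linear : forall x, x <= 0 -> g x = al * - x.

Lemma Ind_loss m (Y : 'I_m -> T -> R) w v :
  (forall k, measurable_fun setT (Y k)) ->
  Ind P g Y w v = (\int[P]_x (loss Y w v x)%:E)%E.
Proof.
move=> mY.
have lossE x : loss Y w v x = \sum_(k < m)
    (if \sum_(l < m) Y l x <= w then al * shortfall (Y k x) (v k) else 0).
  by rewrite /loss; case: ifP => _; rewrite ?mulr_sumr // big1.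
under [RHS]eq_integral do rewrite lossE -sumEFin.
rewrite ge0_integral_sum //; last first.
- by move=> k x _; case: ifP => _; rewrite lee_fin ?mulr_ge0 ?shortfall_ge0.
- move=> k; apply/measurable_EFinP; apply: measurable_capped => //.
  apply: measurable_funM; first exact: measurable_cst.
  exact: measurable_shortfall.
apply: eq_bigr => k _; apply: eq_integral => x _; congr EFin.
case: (ltP (v k) (Y k x)) => vY /=; case: ifP => // _.
- rewrite g_linear; last by rewrite subr_le0 ltW.
  by rewrite opprB /shortfall max_l // subr_ge0 ltW.
- by rewrite shortfall_le0 ?mulr0.
Qed.

Lemma is_argmin_vcons d (X : 'I_d -> T -> R) u c b :
  (forall i, measurable_fun setT (X i)) -> 0 <= c <= u ->
  is_argmin (Ind P g X (u - c)) (Uset d (u - c)) b ->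
  is_argmin (Ind P g (vcons (fun _ => c) X) u) (Uset d.+1 u) (vcons c b).
Proof.
move=> mX cu [Ub b_min].
have mY k : measurable_fun setT (vcons (fun _ => c) X k).
  by rewrite /vcons; case: unlift => [i|] /=; [exact: mX | exact: measurable_cst].
have vcons_tail : (fun i => vcons c b (lift ord0 i)) = b.
  by apply/funext => i; rewrite vcons_lift.
have Ind_vcons : Ind P g (vcons (fun _ => c) X) u (vcons c b) = Ind P g X (u - c) b.
  rewrite !Ind_loss //; apply: eq_integral => x _.
  by rewrite loss_vcons vcons_tail vcons_ord0 shortfall_le0 // mulr0 if_same add0r.
split; first exact: Uset_vcons.
move=> v [v_bnd v_sum]; rewrite Ind_vcons.
have tail_ge0 i : 0 <= v (lift ord0 i) by case/andP: (v_bnd (lift ord0 i)).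
have tail_sum : \sum_(i < d) v (lift ord0 i) = u - v ord0.
  by move: v_sum; rewrite big_ord_recl => <-; ring.
have [v' Uv' v'_close] := Uset_transport _ tail_ge0 tail_sum Ub.
apply: le_trans (b_min _ Uv') _; rewrite !Ind_loss //.
apply: ge0_le_integral => //; do ?by move=> x _; rewrite lee_fin loss_ge0.
  1,2: exact: measurable_loss.
move=> x _; rewrite lee_fin loss_vcons; apply: loss_transport.
by rewrite /shortfall -[c - _](_ : u - v ord0 - (u - c) = _) //; ring.
Qed.

End Loss.

Lemma homogeneous_penalty_linear (R : realType) (g : R -> R) :
  penalty g -> pos_homogeneous g ->
  0 <= g (-1) /\ forall x, x <= 0 -> g x = g (-1) * - x.
Proof.
move=> [_ g_ge0 _ _] g_hom; split; first by apply: g_ge0; rewrite lerN10.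
move=> x x_le0; rewrite mulrC -g_hom ?oppr_ge0 ?lerN10 //.
by rewrite mulrN1 opprK.
Qed.

Unset Implicit Arguments.

Theorem mainTheorem3 (dsp : measure_display) (T : measurableType dsp)
  (R : realType) (P : probability T R) (g : R -> R) (d : nat)
  (X : 'I_d -> T -> R) (u c : R) :
  penalty g -> pos_homogeneous g ->
  (forall i, measurable_fun setT (X i)) ->
  (forall i x, 0 <= X i x) ->
  0 <= u -> 0 <= c <= u ->
  H1 (Ind P g (vcons (fun _ => c) X) u) (Uset d.+1 u) ->
  H1 (Ind P g X (u - c)) (Uset d (u - c)) ->
  forall a b,
    is_argmin (Ind P g (vcons (fun _ => c) X) u) (Uset d.+1 u) a ->
    is_argmin (Ind P g X (u - c)) (Uset d (u - c)) b ->
    a = vcons c b.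
Proof.
move=> g_pen g_hom mX _ _ cu [a0 [_ uniq]] _ a b a_min b_min.
have [al_ge0 g_linear] := homogeneous_penalty_linear g_pen g_hom.
have cb_min := is_argmin_vcons _ al_ge0 g_linear _ _ mX cu b_min.
by rewrite (uniq _ a_min) (uniq _ cb_min).
Qed.
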